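(* Let $t$ be a positive integer and $G$ a complete multipartite graph. Consider the following greedy procedure: while uncolored vertices remain, let $H$ be the subgraph induced by the uncolored vertices (itself a complete multipartite graph); if the largest part of $H$ has at least $2t$ vertices, let $W$ be that entire part, otherwise let $W$ be a maximum $t$-sparse set of $H$; assign a new color to all vertices of $W$. Then the resulting coloring is a $t$-relaxed coloring of $G$ using at most $2\chi_t(G)$ colors.
   Context: A set $S\subseteq V(G)$ is $t$-sparse if the induced subgraph $G[S]$ has maximum degree at most $t$. A map $f$ from $V(G)$ to a finite set of colors is a $t$-relaxed coloring if every vertex $u$ has at most $t$ neighbors $v$ with $f(v)=f(u)$; $\chi_t(G)$ is the minimum number of colors in a $t$-relaxed coloring of $G$. *)

From mathcomp Require Import all_boot.
Set Implicit Arguments. Unset Strict Implicit. Unset Printing Implicit Defensive.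

(* G is complete multipartite: vertices are partitioned into parts (labelled
   by part : T -> nat) and two vertices are adjacent iff they lie in different
   parts.  (This makes e symmetric and irreflexive.) *)
Definition complete_multipartite (T : finType) (e : rel T) : Prop :=
  exists part : T -> nat, forall x y, e x y = (part x != part y).

Definition t_sparse (T : finType) (e : rel T) (t : nat) (S : {set T}) : bool :=
  [forall x in S, #|[set y in S | e x y]| <= t].

Definition t_relaxed (T : finType) (C : eqType) (e : rel T) (t : nat)
  (f : T -> C) : Prop :=
  forall u, #|[set v | e u v & f v == f u]| <= t.

Definition has_relaxed_coloring (T : finType) (e : rel T) (t k : nat) : bool :=
  [exists f : {ffun T -> 'I_k}, [forall u, #|[set v | e u v & f v == f u]| <= t]].

Lemma chi_t_exists (T : finType) (e : rel T) (t : nat) :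
  (forall x, ~~ e x x) -> exists k, has_relaxed_coloring e t k.
Proof.
move=> irr; exists #|T|; apply/existsP; exists [ffun x => enum_rank x].
apply/forallP => u.
apply: leq_trans (leq0n t); rewrite leqn0 cards_eq0; apply/eqP/setP => v.
rewrite !inE !ffunE; apply/negbTE; apply/andP => [[euv /eqP]] /enum_rank_inj Evu.
by move: euv; rewrite Evu (negbTE (irr u)).
Qed.

(* chi_t(G): the minimum number of colors of a t-relaxed coloring
   (defined for loopless graphs; 0 by convention otherwise). *)
Definition chi_t (T : finType) (e : rel T) (t : nat) : nat :=
  match boolP [forall x, ~~ e x x] with
  | AltTrue h => ex_minn (chi_t_exists t (fun x => (forallP h) x))
  | AltFalse _ => 0
  end.

(* The part of H = G[U] containing x in U (the non-neighbours of x in U). *)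
Definition part_of (T : finType) (e : rel T) (U : {set T}) (x : T) : {set T} :=
  [set y in U | ~~ e x y].

Definition max_part (T : finType) (e : rel T) (U : {set T}) : nat :=
  \max_(x in U) #|part_of e U x|.

Definition greedy_step (T : finType) (e : rel T) (t : nat) (U W : {set T}) : Prop :=
  if 2 * t <= max_part e U then
    exists2 x, x \in U & (W = part_of e U x /\ #|W| = max_part e U)
  else
    [/\ W \subset U, t_sparse e t W &
        forall S : {set T}, S \subset U -> t_sparse e t S -> #|S| <= #|W|].

Fixpoint greedy_run (T : finType) (e : rel T) (t : nat) (U : {set T})
  (ws : seq {set T}) : Prop :=
  match ws with
  | [::] => U = set0
  | W :: ws' => [/\ U != set0, greedy_step e t U W & greedy_run e t (U :\: W) ws']
  end.

Definition greedy_coloring (T : finType) (ws : seq {set T}) (v : T) : nat :=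
  find (fun W : {set T} => v \in W) ws.

From mathcomp Require Import all_boot zify.
Set Implicit Arguments. Unset Strict Implicit.

(** Write [P] for the set of parts of the complete multipartite graph [G],
    [V] for its vertex set and [phi U := \sum_(A in P) minn #|A :&: U| 2t].
    A step removing a whole part of size at least [2t] lowers [phi] by
    [2t].  Otherwise every part of [U] has fewer than [2t] vertices, so
    [phi U = #|U|], and the removed maximum [t]-sparse set has at least [t]
    vertices (any [t] vertices form a [t]-sparse set).  Hence [phi]
    drops by at least [t] at each step but the last, and the number of
    colors is less than [phi V / t + 1].  Conversely, a [t]-sparse set
    meeting two parts has at most [2t] vertices, since each of its vertices
    is adjacent to all of it outside its own part.  So, [minn] being
    subadditive, every color class of a [t]-relaxed coloring contributes
    at most [2t] to [phi V], and [phi V <= 2t chi_t(G)]. *)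

Lemma sum_card_fibers (T J : finType) (g : T -> J) (C : {set T}) :
  \sum_(j : J) #|[set x in C | g x == j]| = #|C|.
Proof.
rewrite -sum1_card (partition_big g predT) //=; apply: eq_bigr => j _.
by rewrite -sum1_card; apply: eq_bigl => x; rewrite inE.
Qed.

Lemma leq_min_sum (I : finType) (F : I -> nat) (c : nat) :
  minn (\sum_i F i) c <= \sum_i minn (F i) c.
Proof.
apply: (big_ind2 (fun x y => minn x c <= y)) => //; first by rewrite min0n.
by move=> x1 x2 y1 y2; lia.
Qed.

Lemma t_sparse_small (T : finType) (e : rel T) (t : nat) (S : {set T}) :
  #|S| <= t -> t_sparse e t S.
Proof.
move=> St; apply/forall_inP => x _; apply: leq_trans St.
by apply/subset_leq_card/subsetP => y; rewrite inE => /andP [].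
Qed.

Lemma leq_part_of_max_part (T : finType) (e : rel T) (U : {set T}) x :
  x \in U -> #|part_of e U x| <= max_part e U.
Proof. exact: (@leq_bigmax_cond _ (mem U) (fun y => #|part_of e U y|)). Qed.

Lemma max_part_subset (T : finType) (e : rel T) (U V : {set T}) :
  V \subset U -> max_part e V <= max_part e U.
Proof.
move=> VU; apply/bigmax_leqP => x xV.
apply: leq_trans (leq_part_of_max_part e (subsetP VU x xV)).
by apply/subset_leq_card/subsetP => y; rewrite !inE => /andP [/(subsetP VU) -> ->].
Qed.

Lemma greedy_run_cover (T : finType) (e : rel T) t (U : {set T}) ws u :
  greedy_run e t U ws -> u \in U -> has (fun W : {set T} => u \in W) ws.
Proof.
elim: ws U => [|W ws IH] U /=; first by move=> -> ; rewrite inE.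
case=> _ _ /IH run uU; apply/orP.
by case: (boolP (u \in W)) => uW; [left | right; apply: run; rewrite inE uW].
Qed.

Lemma greedy_coloring_relaxed (T : finType) (e : rel T) t (ws : seq {set T}) :
  {in ws, forall W, t_sparse e t W} ->
  (forall v, has (fun W : {set T} => v \in W) ws) ->
  t_relaxed e t (greedy_coloring ws).
Proof.
move=> sparse cover u; rewrite /greedy_coloring.
set i := find _ ws; have i_lt : i < size ws by rewrite -has_find.
have Wi_sparse := sparse _ (mem_nth set0 i_lt).
have uWi : u \in nth set0 ws i := nth_find set0 (cover u).
apply: leq_trans (forall_inP Wi_sparse u uWi).
apply/subset_leq_card/subsetP => v; rewrite !inE => /andP [euv /eqP vi].
rewrite euv andbT -vi; apply: (nth_find set0 (a := fun W : {set T} => v \in W)).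
by rewrite has_find vi.
Qed.

Lemma chi_t_spec (T : finType) (e : rel T) t :
  (forall x, ~~ e x x) -> has_relaxed_coloring e t (chi_t e t).
Proof.
move=> loopless; rewrite /chi_t; destruct (boolP _) as [h | h].
  by case: ex_minnP.
by case/forallP: h.
Qed.

Lemma relaxed_fiber_sparse (T : finType) (C : eqType) (e : rel T) t
    (f : T -> C) (U : {set T}) c :
  t_relaxed e t f -> t_sparse e t [set v in U | f v == c].
Proof.
move=> f_relaxed; apply/forall_inP => u; rewrite inE => /andP [_ /eqP fu].
apply: leq_trans (f_relaxed u); apply/subset_leq_card/subsetP => v.
by rewrite !inE fu => /andP [/andP [_ ->] ->].
Qed.

Section CompleteMultipartite.
Variables (T : finType) (e : rel T) (part : T -> nat) (t : nat).
Hypothesis He : forall x y, e x y = (part x != part y).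

Definition block (x : T) : {set T} := [set y | part y == part x].

Lemma eq_block x y : (block x == block y) = (part x == part y).
Proof.
apply/eqP/eqP => [Bxy | Pxy]; last by apply/setP => z; rewrite !inE Pxy.
have : x \in block x by rewrite inE.
by rewrite Bxy inE => /eqP.
Qed.

Lemma part_ofE (U : {set T}) x :
  part_of e U x = [set y in U | block y == block x].
Proof. by apply/setP => y; rewrite !inE He negbK eq_block eq_sym. Qed.

Lemma part_of_sparse (U : {set T}) x : t_sparse e t (part_of e U x).
Proof.
apply/forall_inP => y; rewrite inE He negbK => /andP [_ /eqP xy].
rewrite (_ : [set z in _ | _] = set0) ?cards0 //; apply/setP => z.
by rewrite !inE !He negbK -xy -andbA andbN andbF.
Qed.

Lemma two_parts_sparse (C : {set T}) x y :
  t_sparse e t C -> x \in C -> y \in C -> part x != part y -> #|C| <= 2 * t.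
Proof.
move=> /forall_inP sparse xC yC xy.
have cover : C \subset [set z in C | e x z] :|: [set z in C | e y z].
  apply/subsetP => z zC; rewrite !inE !He zC /=.
  by case: (eqVneq (part x) (part z)) => //= <-; rewrite eq_sym.
apply: leq_trans (subset_leq_card cover) _.
by rewrite cardsU; have := sparse _ xC; have := sparse _ yC; lia.
Qed.

(* Summing over all sets [A] is harmless: the term vanishes unless [A] is a
   part. *)
Definition potential (U : {set T}) : nat :=
  \sum_(A : {set T}) minn #|[set x in U | block x == A]| (2 * t).

Lemma potential_gt0 (U : {set T}) : 0 < t -> U != set0 -> 0 < potential U.
Proof.
move=> t_gt0 /set0Pn [u uU]; rewrite /potential (bigD1 (block u)) //=.
apply: leq_trans (leq_addr _ _).
rewrite leq_min muln_gt0 t_gt0 andbT /= andbT card_gt0; apply/set0Pn.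
by exists u; rewrite inE uU eqxx.
Qed.

Lemma potential_le_card (U : {set T}) : potential U <= #|U|.
Proof.
by rewrite -(sum_card_fibers block U); apply: leq_sum => A _; apply: geq_minl.
Qed.

Lemma potential_card (U : {set T}) : max_part e U <= 2 * t -> potential U = #|U|.
Proof.
move=> small; rewrite /potential -(sum_card_fibers block U).
apply: eq_bigr => A _; apply/minn_idPl.
have [-> | [y]] := set_0Vmem [set x in U | block x == A]; first by rewrite cards0.
rewrite inE => /andP [yU /eqP <-]; rewrite -part_ofE.
exact: leq_trans (leq_part_of_max_part e yU) small.
Qed.

Lemma potential_removeD_part (U : {set T}) x :
  potential (U :\: part_of e U x) + minn #|part_of e U x| (2 * t) = potential U.
Proof.
rewrite /potential (bigD1 (block x)) // [RHS](bigD1 (block x)) //= part_ofE.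
set P := [set y in U | _].
rewrite (_ : [set y in U :\: P | _] = set0) ?cards0 ?min0n ?add0n; last first.
  by apply/setP => y; rewrite !inE; case: (y \in U); case: (block y == block x).
rewrite addnC; congr (_ + _); apply: eq_bigr => A Ax; congr minn.
apply: eq_card => y; rewrite !inE.
case: (eqVneq (block y) A) => [-> | _]; last by rewrite !andbF.
by rewrite (negbTE Ax) andbF !andbT.
Qed.

Lemma potential_sparse (C : {set T}) : t_sparse e t C -> potential C <= 2 * t.
Proof.
move=> sparse; have [/existsP [x /existsP [y /and3P [xC yC xy]]] | one_part] :=
  boolP [exists x, exists y, [&& x \in C, y \in C & part x != part y]].
  exact: leq_trans (potential_le_card C) (two_parts_sparse sparse xC yC xy).
have [-> | [x xC]] := set_0Vmem C.
  by apply: leq_trans (potential_le_card _) _; rewrite cards0.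
rewrite /potential (bigD1 (block x)) //= big1 ?addn0 ?geq_minr // => A Ax.
suff -> : #|[set y in C | block y == A]| = 0 by rewrite min0n.
apply: eq_card0 => y; rewrite !inE.
apply/negbTE/andP => [[yC /eqP yA]]; move: Ax; rewrite -yA eq_block => yx.
by case/existsP: one_part; exists x; apply/existsP; exists y; rewrite xC yC eq_sym.
Qed.

Lemma potential_le_sum_fibers (I : finType) (g : T -> I) (U : {set T}) :
  potential U <= \sum_i potential [set x in U | g x == i].
Proof.
rewrite /potential exchange_big /=; apply: leq_sum => A _.
rewrite -(sum_card_fibers g [set x in U | block x == A]).
apply: leq_trans (leq_min_sum _ _) _; apply: leq_sum => i _.
rewrite (@eq_card _ _ [set x in [set x in U | g x == i] | block x == A]) //.
by move=> x; rewrite !inE andbAC.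
Qed.

Lemma greedy_step_potential (U W : {set T}) :
  greedy_step e t U W -> U :\: W != set0 -> potential (U :\: W) + t <= potential U.
Proof.
rewrite /greedy_step; case: ifP => [big_part [x _ [-> W_max]] _ | /negbT].
  rewrite -(potential_removeD_part U x) W_max (minn_idPr big_part) leq_add2l.
  by rewrite mul2n -addnn leq_addr.
rewrite -ltnNge => small_parts [WU _ W_max] /set0Pn [y].
rewrite inE => /andP [yW yU].
have t_le_W : t <= #|W|.
  rewrite leqNgt; apply/negP => W_lt_t.
  have yW_sparse : t_sparse e t (y |: W).
    by apply: t_sparse_small; rewrite cardsU1 yW.
  have := W_max _ _ yW_sparse; rewrite subUset sub1set yU WU cardsU1 yW.
  by move/(_ isT); rewrite ltnn.
have UW_small := leq_trans (max_part_subset e (subsetDl U W)) (ltnW small_parts).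
rewrite (potential_card UW_small) (potential_card (ltnW small_parts)).
by rewrite -(cardsID W U) (setIidPr WU) addnC leq_add2r.
Qed.

Lemma greedy_run_size (U : {set T}) ws :
  0 < t -> greedy_run e t U ws -> t * size ws < potential U + t.
Proof.
move=> t_gt0; elim: ws U => [|W ws IH] U /=.
  by rewrite muln0 addn_gt0 t_gt0 orbT.
case=> U_ne0 step run; rewrite mulnS addnC ltn_add2r.
have [UW0 | UW_ne0] := eqVneq (U :\: W) set0.
  move: run; rewrite UW0; case: ws {IH} => [_ | ? ? [/eqP]] //.
  by rewrite muln0 potential_gt0.
exact: leq_trans (IH _ run) (greedy_step_potential step UW_ne0).
Qed.

Lemma greedy_run_sparse (U : {set T}) ws :
  greedy_run e t U ws -> {in ws, forall W, t_sparse e t W}.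
Proof.
elim: ws U => [|W ws IH] U //= [_ step /IH ws_sparse] V; rewrite inE.
case/predU1P=> [-> | /ws_sparse //]; move: step; rewrite /greedy_step.
by case: ifP => _ [] // x _ [-> _]; apply: part_of_sparse.
Qed.

Lemma potential_le_chi_t : potential [set: T] <= 2 * t * chi_t e t.
Proof.
have loopless x : ~~ e x x by rewrite He eqxx.
have [f /forallP f_relaxed] := existsP (chi_t_spec t loopless).
apply: leq_trans (potential_le_sum_fibers f [set: T]) _.
have fiber_sparse i : t_sparse e t [set x in [set: T] | f x == i].
  exact: relaxed_fiber_sparse.
apply: (@leq_trans (\sum_(i < chi_t e t) 2 * t)).
  by apply: leq_sum => i _; apply/potential_sparse/fiber_sparse.
by rewrite sum_nat_const card_ord mulnC.
Qed.

End CompleteMultipartite.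

Theorem mainTheorem6 (T : finType) (e : rel T) (t : nat) (ws : seq {set T}) :
  0 < t ->
  complete_multipartite e ->
  greedy_run e t [set: T] ws ->
  t_relaxed e t (greedy_coloring ws) /\ size ws <= 2 * chi_t e t.
Proof.
move=> t_gt0 [part He] run; split.
  apply: greedy_coloring_relaxed; first exact: (greedy_run_sparse He run).
  by move=> v; apply: (greedy_run_cover run); rewrite inE.
have : t * size ws < t * (2 * chi_t e t).+1.
  apply: leq_trans (greedy_run_size He t_gt0 run) _.
  by rewrite mulnS addnC leq_add2l mulnA (mulnC t) (potential_le_chi_t t He).
by rewrite ltn_pmul2l.
Qed.
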